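(* Let $\lambda,\mu$ be partitions and $x$ an indeterminate, and put $$X_{\lambda\mu}(x):=\prod_{(i,j)\in[\mu]}(j-i-x)\prod_{(i,j)\in [\lambda]}\biggl((j-i-\mu_1+x)\prod_{1\le k\le\mu_1}\frac{j-i+\bar{\mu}_k-k+1+x}{j-i+\bar{\mu}_k-k+x}\biggr).$$ Then $X_{\lambda\mu}(x)=X_{\mu\lambda}(-x)$.
   Context: For a partition $\lambda$, $[\lambda]=\{(i,j): i\ge1,\ 1\le j\le\lambda_i\}$ is its diagram and $\bar\lambda$ is the conjugate partition ($\bar\lambda_k$ = number of $i$ with $\lambda_i\ge k$). *)

From HB Require Import structures.
From mathcomp Require Import all_boot all_order all_algebra fraction.
Set Implicit Arguments. Unset Strict Implicit. Unset Printing Implicit Defensive.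
Import Order.TTheory GRing.Theory Num.Theory.
Local Open Scope ring_scope.

Definition is_partition (s : seq nat) : bool :=
  sorted geq s && all (fun m => 0 < m)%N s.

(* 1-indexed part: part s i = s_i (0 beyond the length, and for i = 0). *)
Definition part (s : seq nat) (i : nat) : nat := if i is 0 then 0%N else nth 0%N s i.-1.

Definition conj_part (s : seq nat) (k : nat) : nat := count (fun m => k <= m)%N s.

(* X_{lam,mu} evaluated at an element x of a field F.
   Diagram [lam] = {(i,j) : 1 <= i <= size lam, 1 <= j <= lam_i}. *)
Definition Xlm (F : fieldType) (lam mu : seq nat) (x : F) : F :=
  (\prod_(1 <= i < (size mu).+1) \prod_(1 <= j < (part mu i).+1)
      ((j%:Z - i%:Z)%:~R - x)) *
  \prod_(1 <= i < (size lam).+1) \prod_(1 <= j < (part lam i).+1)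
     (((j%:Z - i%:Z - (part mu 1)%:Z)%:~R + x) *
      \prod_(1 <= k < (part mu 1).+1)
        (((j%:Z - i%:Z + (conj_part mu k)%:Z - k%:Z + 1)%:~R + x) /
         ((j%:Z - i%:Z + (conj_part mu k)%:Z - k%:Z)%:~R + x))).

Definition ratfun := {fraction {poly rat}}.
Definition xvar : ratfun := FracField.tofrac ('X : {poly rat}).

From mathcomp Require Import all_boot all_order all_algebra fraction.
From mathcomp Require Import ring.
Import Order.TTheory GRing.Theory Num.Theory.
Local Open Scope ring_scope.
Set Implicit Arguments. Unset Strict Implicit. Unset Printing Implicit Defensive.

(* Write phi w = (w + 1)(w - 1)/w^2 and let c, d range over the contents
   j - i of cells.  For generic x the factor of X_{lam,mu} attached to a cell
   of [lam] with content c equals (c + x) * prod_{d in [mu]} phi (c - d + x):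
   deleting the first row of mu shifts all contents of the remaining cells
   by one, and both the deleted row and the tail k > mu_2 of the inner
   product telescope.  Hence
     X_{lam,mu}(x) = prod_[mu] (d - x) * prod_[lam] (c + x)
                     * prod_{[lam] x [mu]} phi (c - d + x),
   which is visibly invariant under lam <-> mu, x <-> -x because phi is even. *)

Definition content_prod (R : comPzRingType) (lam : seq nat) (f : int -> R) : R :=
  \prod_(1 <= i < (size lam).+1) \prod_(1 <= j < (part lam i).+1) f (j%:Z - i%:Z).

Lemma eq_content_prod (R : comPzRingType) lam (f g : int -> R) :
  f =1 g -> content_prod lam f = content_prod lam g.
Proof. by move=> fg; apply: eq_bigr => i _; apply: eq_bigr => j _. Qed.

Lemma content_prodM (R : comPzRingType) lam (f g : int -> R) :
  content_prod lam (fun c => f c * g c) = content_prod lam f * content_prod lam g.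
Proof. by rewrite -big_split; apply: eq_bigr => i _; rewrite -big_split. Qed.

Lemma exchange_content_prod (R : comPzRingType) lam mu (f : int -> int -> R) :
  content_prod lam (fun c => content_prod mu (f c)) =
  content_prod mu (fun d => content_prod lam (f^~ d)).
Proof.
rewrite /content_prod.
have inner i : \prod_(1 <= j < (part lam i).+1) content_prod mu (f (j%:Z - i%:Z)) =
    \prod_(1 <= k < (size mu).+1) \prod_(1 <= l < (part mu k).+1)
      \prod_(1 <= j < (part lam i).+1) f (j%:Z - i%:Z) (l%:Z - k%:Z).
  by rewrite exchange_big; apply: eq_bigr => k _; rewrite exchange_big.
under eq_bigr do rewrite inner.
by rewrite exchange_big; apply: eq_bigr => k _; rewrite exchange_big.
Qed.

Lemma content_prod_cons (R : comPzRingType) r mu (f : int -> R) :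
  content_prod (r :: mu) f =
  (\prod_(0 <= j < r) f j%:Z) * content_prod mu (fun c => f (c - 1)).
Proof.
rewrite /content_prod /= big_nat_recl //; congr (_ * _).
  by rewrite big_add1 /=; apply: eq_bigr => j _; rewrite intS; congr f; ring.
apply: eq_big_nat => -[|i] // _; apply: eq_bigr => j _; congr f.
by rewrite !intS; ring.
Qed.

Lemma is_partition_cons r mu :
  is_partition (r :: mu) -> is_partition mu /\ (part mu 1 <= r)%N.
Proof.
rewrite /is_partition /= => /andP[sorted_rmu /andP[_ pos_mu]].
rewrite (path_sorted sorted_rmu) pos_mu; split=> //.
by case: mu sorted_rmu {pos_mu} => //= m mu /andP[].
Qed.

Lemma conj_part_cons r mu k :
  (k <= r)%N -> conj_part (r :: mu) k = (conj_part mu k).+1.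
Proof. by rewrite /conj_part /= => ->. Qed.

Lemma conj_part_gt_head mu k :
  is_partition mu -> (part mu 1 < k)%N -> conj_part mu k = 0%N.
Proof.
case: mu => [|m mu] //= /andP[sorted_mu _] mk.
have /allP le_m := order_path_min (rev_trans leq_trans) sorted_mu.
rewrite /conj_part /= leqNgt mk; apply/eqP; rewrite -leqn0 leqNgt -has_count.
by apply/hasP => -[a /le_m /= am ka]; rewrite ltnNge (leq_trans ka am) in mk.
Qed.

Lemma telescope_prod_ratio (F : fieldType) n m (f : nat -> F) :
  (n <= m)%N -> (forall k, f k != 0) ->
  \prod_(n <= k < m) (f k / f k.+1) = f n / f m.
Proof.
rewrite leq_eqVlt => /orP[/eqP <- | lt_nm] f_neq0; first by rewrite big_geq ?divff.
by rewrite telescope_prodr // => k _; rewrite unitfE.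
Qed.

Definition int_generic (F : fieldType) (x : F) := forall n : int, n%:~R + x != 0.

Definition phi (F : fieldType) (w : F) : F := (w + 1) * (w - 1) / (w * w).

Lemma phiN (F : fieldType) (w : F) : phi (- w) = phi w.
Proof. by rewrite /phi mulrNN; congr (_ / _); ring. Qed.

Definition cell_factor (F : fieldType) (mu : seq nat) (x : F) (c : int) : F :=
  ((c - (part mu 1)%:Z)%:~R + x) *
  \prod_(1 <= k < (part mu 1).+1)
    (((c + (conj_part mu k)%:Z - k%:Z + 1)%:~R + x) /
     ((c + (conj_part mu k)%:Z - k%:Z)%:~R + x)).

Lemma Xlm_cell_factor (F : fieldType) lam mu (x : F) :
  Xlm lam mu x =
  content_prod mu (fun d => d%:~R - x) * content_prod lam (cell_factor mu x).
Proof. by []. Qed.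

Section GenericShift.

Variables (F : fieldType) (x : F).
Hypothesis x_generic : int_generic x.

Lemma generic_neq0 (n : int) (y : F) : n%:~R + x = y -> y != 0.
Proof. by move=> <-. Qed.

Lemma prod_phi_row c r :
  \prod_(0 <= j < r) phi ((c - j%:Z)%:~R + x) =
  ((c + 1)%:~R + x) * ((c - r%:Z)%:~R + x) /
  (((c + 1 - r%:Z)%:~R + x) * (c%:~R + x)).
Proof.
elim: r => [|r IHr]; first by rewrite big_nil !subr0 divff // mulf_neq0.
rewrite big_nat_recr //= IHr /phi.
field; apply/and3P; split; [apply: (generic_neq0 (n := c)) | apply: (generic_neq0 (n := c - r%:Z)) |
  apply: (generic_neq0 (n := c + 1 - r%:Z))]; ring.
Qed.

Lemma cell_factor_cons r mu c : is_partition (r :: mu) ->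
  cell_factor (r :: mu) x c =
  ((c - r%:Z)%:~R + x) / ((c + 1 - r%:Z)%:~R + x) * cell_factor mu x (c + 1).
Proof.
case/is_partition_cons=> part_mu le_mr; rewrite /cell_factor.
change (part (r :: mu) 1) with r; set m := part mu 1 in le_mr *.
rewrite (big_cat_nat (n := m.+1)) //.
have -> : \prod_(1 <= k < m.+1)
    (((c + (conj_part (r :: mu) k)%:Z - k%:Z + 1)%:~R + x) /
     ((c + (conj_part (r :: mu) k)%:Z - k%:Z)%:~R + x)) =
  \prod_(1 <= k < m.+1)
    (((c + 1 + (conj_part mu k)%:Z - k%:Z + 1)%:~R + x) /
     ((c + 1 + (conj_part mu k)%:Z - k%:Z)%:~R + x)).
  apply: eq_big_nat => k /andP[_ le_km].
  rewrite conj_part_cons; last by rewrite ltnS in le_km; exact: leq_trans le_km le_mr.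
  by rewrite intS; congr (_ / _); ring.
pose g k := (c + 2 - k%:Z)%:~R + x.
have -> : \prod_(m.+1 <= k < r.+1)
    (((c + (conj_part (r :: mu) k)%:Z - k%:Z + 1)%:~R + x) /
     ((c + (conj_part (r :: mu) k)%:Z - k%:Z)%:~R + x)) = g m.+1 / g r.+1.
  rewrite -(@telescope_prod_ratio _ m.+1 r.+1 g) ?ltnS //; last by move=> k; apply: x_generic.
  apply: eq_big_nat => k /andP[lt_mk le_kr].
  by rewrite conj_part_cons // conj_part_gt_head // /g !intS; congr (_ / _); ring.
rewrite /g !intS /=; field.
by apply: (generic_neq0 (n := c + 1 - r%:Z)); ring.
Qed.

Lemma cell_factor_phi mu c : is_partition mu ->
  cell_factor mu x c = (c%:~R + x) * content_prod mu (fun d => phi ((c - d)%:~R + x)).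
Proof.
elim: mu c => [|r mu IHmu] c part_rmu.
  by rewrite /cell_factor /content_prod !big_geq // subr0 !mulr1.
have [part_mu _] := is_partition_cons part_rmu.
rewrite cell_factor_cons // IHmu // content_prod_cons /= prod_phi_row.
have -> : content_prod mu (fun d => phi ((c - (d - 1))%:~R + x)) =
          content_prod mu (fun d => phi ((c + 1 - d)%:~R + x)).
  by apply: eq_content_prod => d; congr phi; ring.
field; apply/andP; split;
  [apply: (generic_neq0 (n := c)) | apply: (generic_neq0 (n := c + 1 - r%:Z))]; ring.
Qed.

End GenericShift.

Lemma Xlm_phiE (F : fieldType) lam mu (x : F) : is_partition mu -> int_generic x ->
  Xlm lam mu x =
  content_prod mu (fun d => d%:~R - x) * content_prod lam (fun c => c%:~R + x) *
  content_prod lam (fun c => content_prod mu (fun d => phi ((c - d)%:~R + x))).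
Proof.
move=> part_mu x_generic; rewrite Xlm_cell_factor -mulrA -content_prodM.
by congr (_ * _); apply: eq_content_prod => c; apply: cell_factor_phi.
Qed.

Lemma int_genericN (F : fieldType) (x : F) : int_generic x -> int_generic (- x).
Proof. by move=> x_generic n; rewrite -oppr_eq0 opprD opprK -mulrNz x_generic. Qed.

Lemma xvar_int_generic : int_generic xvar.
Proof.
move=> n; have -> : n%:~R = FracField.tofrac (n%:~R : {poly rat}) by rewrite rmorph_int.
by rewrite -tofracD tofrac_eq0 -(rmorph_int polyC) addrC -size_poly_eq0 size_XaddC.
Qed.

Theorem corollary3p3 (lam mu : seq nat) :
  is_partition lam -> is_partition mu ->
  Xlm lam mu xvar = Xlm mu lam (- xvar).
Proof.
move=> part_lam part_mu.
have xvar_generic := xvar_int_generic; have oppxvar_generic := int_genericN xvar_generic.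
rewrite !Xlm_phiE //.
rewrite exchange_content_prod [in RHS](mulrC (content_prod lam _)); congr (_ * _ * _).
  by apply: eq_content_prod => c; rewrite opprK.
apply: eq_content_prod => d; apply: eq_content_prod => c.
by rewrite -phiN; congr phi; ring.
Qed.
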